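(* Suppose that the bivariate copula $A$ allows a continuous Markov kernel $K_A$. Then $$\lim_{N\to\infty}\sup_{(x,y)\in[0,1]^2}\left|K_{\mathcal{CB}_N(A)}(x,[0,y])-K_A(x,[0,y])\right|=0,$$ i.e. $(\mathcal{CB}_N(A))_{N\in\mathbb{N}}$ converges uniformly conditional to $A$.
   Context: A (bivariate) copula is a distribution function on $[0,1]^2$ with uniform marginals; each copula $B$ corresponds to a doubly stochastic measure $\mu_B$ with $B(x,y)=\mu_B([0,x]\times[0,y])$. A Markov kernel of $B$ is a map $K_B:[0,1]\times\mathcal{B}([0,1])\to[0,1]$, measurable in the first argument, a probability measure in the second, with $\int_{E_1}K_B(x,E_2)\,d\lambda(x)=\mu_B(E_1\times E_2)$ for all Borel $E_1,E_2$ ($\lambda$ = Lebesgue measure). $A$ allows a continuous Markov kernel if it has a version $K_A$ with $(x,y)\mapsto K_A(x,[0,y])$ continuous on $[0,1]^2$; $K_A$ denotes this version. Checkerboard approximation: $I_1^N=[0,\tfrac1N]$, $I_i^N=(\tfrac{i-1}N,\tfrac iN]$ ($i=2,\dots,N$), $Q_{i,j}^N=I_i^N\times I_j^N$; $\mathcal{CB}_N(A)$ is the absolutely continuous copula with density $N^2\sum_{i,j=1}^N\mu_A(Q^N_{i,j})\mathbf 1_{Q^N_{i,j}}$, with Markov kernel version $K_{\mathcal{CB}_N(A)}(x,[0,y])=N^2\sum_{i,j=1}^N\mu_A(Q^N_{i,j})\mathbf 1_{I^N_i}(x)\,\lambda([0,y]\cap I^N_j)$. *)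

From HB Require Import structures.
From mathcomp Require Import all_boot all_order all_algebra.
From mathcomp Require Import all_classical all_reals all_analysis measurable_realfun.
Set Implicit Arguments. Unset Strict Implicit. Unset Printing Implicit Defensive.
Import Order.TTheory GRing.Theory Num.Theory.
Import numFieldNormedType.Exports.
Local Open Scope classical_set_scope.
Local Open Scope ring_scope.

Definition unitI (R : realType) : set R := `[0%R, 1%R].
Arguments unitI R : clear implicits.

(* Doubly stochastic measure on [0,1]^2 (realised on R x R, vanishing outside
   [0,1]^2): uniform marginals. Every copula B corresponds to exactly one such
   measure mu_B with B(x,y) = mu_B([0,x] x [0,y]). *)
Definition doubly_stochastic (R : realType)
  (mu : {measure set (R * R)%type -> \bar R}) : Prop :=
  mu (~` (unitI R `*` unitI R)) = 0%E /\
  (forall E : set R, measurable E -> E `<=` unitI R ->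
     mu (E `*` unitI R) = (@lebesgue_measure R) E) /\
  (forall E : set R, measurable E -> E `<=` unitI R ->
     mu (unitI R `*` E) = (@lebesgue_measure R) E).

Definition copula_of (R : realType) (mu : {measure set (R * R)%type -> \bar R})
  (x y : R) : R := fine (mu (`[0%R, x] `*` `[0%R, y])).

Definition markov_kernel_of (R : realType)
  (mu : {measure set (R * R)%type -> \bar R})
  (K : R -> {measure set R -> \bar R}) : Prop :=
  (forall x, unitI R x -> K x (unitI R) = 1%E /\ K x (~` unitI R) = 0%E) /\
  (forall E : set R, measurable E -> E `<=` unitI R ->
     measurable_fun (unitI R) (fun x => K x E)) /\
  (forall E1 E2 : set R, measurable E1 -> measurable E2 ->
     E1 `<=` unitI R -> E2 `<=` unitI R ->
     (\int[@lebesgue_measure R]_(x in E1) K x E2)%E = mu (E1 `*` E2)).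

Definition continuous_kernel (R : realType) (K : R -> {measure set R -> \bar R})
  : Prop :=
  {within unitI R `*` unitI R,
     continuous (fun p : R * R => fine (K p.1 `[0%R, p.2]%classic))}.

Definition cbI (R : realType) (N i : nat) : set R :=
  if i == 1%N then `[0%R, N%:R^-1]%classic
  else `](i.-1)%:R / N%:R, i%:R / N%:R]%classic.
Arguments cbI R N i : clear implicits.

Definition cbQ (R : realType) (N i j : nat) : set (R * R)%type :=
  cbI R N i `*` cbI R N j.
Arguments cbQ R N i j : clear implicits.

(* The version of the Markov kernel of CB_N(A), evaluated at (x,[0,y]):
   N^2 sum_{i,j=1}^N mu_A(Q_ij) 1_{I_i}(x) lambda([0,y] cap I_j). *)
Definition cb_kernel (R : realType) (mu : {measure set (R * R)%type -> \bar R})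
  (N : nat) (x y : R) : R :=
  (N%:R ^+ 2) * \sum_(1 <= i < N.+1) \sum_(1 <= j < N.+1)
     fine (mu (cbQ R N i j)) * (\1_(cbI R N i) x)
       * fine ((@lebesgue_measure R) (`[0%R, y]%classic `&` cbI R N j)).

From HB Require Import structures.
From mathcomp Require Import all_boot all_order all_algebra.
From mathcomp Require Import all_classical all_reals all_analysis measurable_realfun.
From mathcomp Require Import ring lra.
Import Order.TTheory GRing.Theory Num.Theory.
Import numFieldNormedType.Exports.
Local Open Scope classical_set_scope.
Local Open Scope ring_scope.
Set Implicit Arguments. Unset Strict Implicit. Unset Printing Implicit Defensive.

(* For x in I_i, the map y |-> K_{CB_N(A)}(x,[0,y]) interpolates linearly between
   its values at the grid points j/N, and these values N mu_A(I_i x [0,j/N]) =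
   N \int_{I_i} K_A(t,[0,j/N]) dt are averages of K_A over a strip of width 1/N.
   Summation by parts writes the interpolation as a convex combination of the grid
   values with hat-function weights vanishing unless |y - j/N| < 1/N, so the error
   at (x,y) is bounded by the oscillation of the uniformly continuous function
   (x,y) |-> K_A(x,[0,y]) at scale 1/N. *)

Lemma compact_within_unif_continuous (R : realType) (T U : pseudoMetricType R)
    (A : set T) (f : T -> U) :
  compact A -> {within A, continuous f} ->
  forall e, 0 < e -> exists2 d, 0 < d &
    forall p q, A p -> A q -> ball p d q -> ball (f p) e (f q).
Proof.
move=> /compact_near_coveringP/near_covering_withinP cA cf e e0.
have : \forall n \near \oo, A `<=`
    [set p | forall q, A q -> ball p n.+1%:R^-1 q -> ball (f p) e (f q)].
  apply: cA => x Ax.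
  have e20 : 0 < e / 2 by rewrite divr_gt0.
  have := cvg_ball (iffLR (subspace_continuousP _ _) cf x Ax) e20.
  rewrite near_withinE => /(_ (within_filter _ _))/nbhs_ballP[r /= r0 near_x].
  have r20 : 0 < r / 2 by rewrite divr_gt0.
  exists (ball x (r / 2), [set n | n.+1%:R^-1 < r / 2]).
    by split; [exact: nbhsx_ballx | exact: (near_infty_natSinv_lt (PosNum r20))].
  case=> x' n /= [bxx' hn] Ax' q Aq bx'q.
  have bxq : ball x r q.
    by rewrite [r]splitr; apply: ball_triangle bxx' (le_ball (ltW hn) bx'q).
  have bxx'r : ball x r x'.
    by apply: le_ball bxx'; rewrite ler_pdivrMr // ler_pMr // ler1n.
  rewrite [e]splitr.
  exact: ball_triangle (ball_sym (near_x _ bxx'r Ax')) (near_x _ bxq Aq).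
case=> n _ cover; exists n.+1%:R^-1; first by rewrite invr_gt0 ltr0n.
by move=> p q Ap; exact: cover n (leqnn n) p Ap q.
Qed.

Lemma ler_dist_convex_sum (R : numDomainType) (I : eqType) (r : seq I)
    (w V : I -> R) (a eps : R) :
  (forall i, i \in r -> 0 <= w i) ->
  (forall i, i \in r -> w i != 0 -> `|V i - a| <= eps) ->
  \sum_(i <- r) w i = 1 -> `|\sum_(i <- r) w i * V i - a| <= eps.
Proof.
move=> w_ge0 V_near w_sum1.
have -> : \sum_(i <- r) w i * V i - a = \sum_(i <- r) w i * (V i - a).
  rewrite -[a in LHS]mul1r -w_sum1 mulr_suml -sumrB.
  by apply: eq_bigr => i _; rewrite mulrBr.
rewrite -[eps]mul1r -w_sum1 mulr_suml.
apply: le_trans (ler_norm_sum _ _ _) _.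
rewrite big_seq [X in _ <= X]big_seq; apply: ler_sum => i ri.
rewrite normrM ger0_norm ?w_ge0 //.
have [->|wi0] := eqVneq (w i) 0; first by rewrite !mul0r.
by rewrite ler_wpM2l ?w_ge0 ?V_near.
Qed.

Lemma summation_by_parts (R : comPzRingType) (p w : nat -> R) n :
  \sum_(1 <= j < n.+1) (p j - p j.-1) * w j =
  \sum_(0 <= j < n.+1) p j * (w j - w j.+1) + p n * w n.+1 - p 0%N * w 0%N.
Proof.
elim: n => [|n IH]; first by rewrite big_geq // big_nat1; ring.
by rewrite [in RHS]big_nat_recr //= big_nat_recr //= IH; ring.
Qed.

Lemma minr_diff_concave (R : realDomainType) (y a h : R) : 0 <= h ->
  Num.min y (a + h) - Num.min y a <= Num.min y a - Num.min y (a - h).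
Proof. by move=> h0; rewrite !minEle; case: (leP y a) => ?;
  case: (leP y (a + h)) => ?; case: (leP y (a - h)) => ?; lra. Qed.

Lemma minr_diff_affine (R : realDomainType) (y a h : R) : 0 <= h ->
  y <= a - h \/ a + h <= y ->
  Num.min y (a + h) - Num.min y a = Num.min y a - Num.min y (a - h).
Proof. by move=> h0 [] yah; rewrite !minEle; case: (leP y a) => ?;
  case: (leP y (a + h)) => ?; case: (leP y (a - h)) => ?; lra. Qed.

Lemma ereal_sup_norm_cvg0 (R : realType) (T : Type) (A : set T)
    (f : nat -> T -> R) : A !=set0 ->
  (forall e, 0 < e -> \forall n \near \oo, forall p, A p -> `|f n p| <= e) ->
  (fun n => ereal_sup [set `|f n p|%:E | p in A]) @ \oo --> 0%E.
Proof.
move=> [p0 Ap0] f_small; set u := fun n => _.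
have u_small e : 0 < e -> \forall n \near \oo, (0 <= u n <= e%:E)%E.
  move=> e0; apply: filterS (f_small e e0) => n fn_small; apply/andP; split.
    apply: (@le_trans _ _ `|f n p0|%:E); first by rewrite lee_fin.
    by apply: ereal_sup_ubound; exists p0.
  by rewrite /u; apply: ge_ereal_sup => _ [p Ap <-]; rewrite lee_fin fn_small.
have u_fin n e : (0 <= u n <= e%:E)%E -> u n \is a fin_num.
  by move=> /andP[u0 ue]; rewrite ge0_fin_numE // (le_lt_trans ue) ?ltry.
apply/fine_cvgP; split.
  by apply: filterS (u_small 1 ltr01) => n; exact: (u_fin n 1).
apply/cvgrPdist_le => e e0; apply: filterS (u_small e e0) => n.
move=> /[dup] /u_fin un_fin /andP[u0 ue].
by rewrite /= sub0r normrN ger0_norm ?fine_ge0 // -lee_fin fineK.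
Qed.

Lemma lebesgue_measure_setI_itv_cc (R : realType) (y b : R) : 0 <= y -> 0 <= b ->
  (@lebesgue_measure R) (`[0, y]%classic `&` `[0, b]%classic) = (Num.min y b)%:E.
Proof.
move=> y0 b0.
have -> : `[0, y]%classic `&` `[0, b]%classic = `[0, Num.min y b]%classic :> set R.
  by apply/seteqP; split => z /=; rewrite !in_itv /= le_min;
    [move=> [/andP[-> ->] /andP[_ ->]] | move=> /andP[-> /andP[-> ->]]].
rewrite lebesgue_measure_itv /= lte_fin oppr0 adde0.
case: ltP => // m_le0; congr (_%:E); apply/eqP.
by rewrite eq_le m_le0 le_min y0 b0.
Qed.

Lemma lebesgue_measure_setI_itv_oc (R : realType) (y a b : R) :
  0 <= a -> a <= b ->
  (@lebesgue_measure R) (`[0, y]%classic `&` `]a, b]%classic) =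
  (Num.min y b - Num.min y a)%:E.
Proof.
move=> a0 ab.
have -> : `[0, y]%classic `&` `]a, b]%classic = `]a, Num.min y b]%classic :> set R.
  apply/seteqP; split => z /=; rewrite !in_itv /= le_min.
    by move=> [/andP[_ ->] /andP[-> ->]].
  by move=> /andP[az /andP[-> ->]]; rewrite az; split => //; lra.
rewrite lebesgue_measure_itv /= lte_fin -EFinD.
case: (ltP a (Num.min y b)) => h; congr (_%:E); move: h; rewrite !minEle.
all: by case: (leP y b) => ?; case: (leP y a) => ? ?; lra.
Qed.

Section checkerboard.
Variables (R : realType) (N : nat).
Hypothesis N_gt0 : (0 < N)%N.

Let N_pos : 0 < N%:R :> R. Proof. by rewrite ltr0n. Qed.

Lemma measurable_cbI i : measurable (cbI R N i).
Proof. by rewrite /cbI; case: ifP. Qed.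

Lemma cbIE i x : cbI R N i x =
  if i == 1%N then 0 <= x <= N%:R^-1 else (i.-1)%:R / N%:R < x <= i%:R / N%:R.
Proof. by rewrite /cbI; case: ifP => _ /=; rewrite in_itv. Qed.

Lemma cbI_sub_unit i : (1 <= i <= N)%N -> cbI R N i `<=` unitI R.
Proof.
move=> /andP[i_ge1 i_leN] x; rewrite cbIE /unitI /= in_itv /=.
have inv_le1 : N%:R^-1 <= 1 :> R by rewrite invf_le1 // ler1n.
have i_le1 : i%:R / N%:R <= 1 :> R by rewrite ler_pdivrMr // mul1r ler_nat.
have i1_ge0 : 0 <= (i.-1)%:R / N%:R :> R by rewrite divr_ge0.
by case: ifP => _ /andP[lo hi]; apply/andP; split; lra.
Qed.

Lemma lebesgue_measure_cbI i : (1 <= i)%N ->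
  (@lebesgue_measure R) (cbI R N i) = (N%:R^-1)%:E.
Proof.
move=> i_ge1; rewrite /cbI; case: ifP => [_|/eqP i_neq1].
  by rewrite lebesgue_measure_itv /= lte_fin invr_gt0 N_pos oppr0 adde0.
case: i i_ge1 i_neq1 => [//|[//|i]] _ _ /=.
rewrite lebesgue_measure_itv /= lte_fin ltr_pM2r ?invr_gt0 // ltr_nat ltnSn.
by rewrite -EFinD -mulrBl -natrB // subSnn mul1r.
Qed.

Lemma cbI_dist i x t : cbI R N i x -> cbI R N i t -> `|x - t| <= N%:R^-1.
Proof.
rewrite !cbIE ler_norml; case: ifP => _ /andP[x_lo x_hi] /andP[t_lo t_hi].
  by apply/andP; split; lra.
have width : i%:R / N%:R = (i.-1)%:R / N%:R + N%:R^-1 :> R.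
  case: i x_lo x_hi {t_lo t_hi} => [|i] /= lo hi; first lra.
  by rewrite -nat1r mulrDl mul1r addrC.
by apply/andP; split; lra.
Qed.

Lemma sum_indic_cbI n x : (1 <= n)%N ->
  \sum_(1 <= i < n.+1) \1_(cbI R N i) x = \1_(`[0, n%:R / N%:R]%classic) x :> R.
Proof.
elim: n => [//|[_ _|n IH _]]; first by rewrite big_nat1 /cbI mul1r.
rewrite big_nat_recr //= IH // !indicE /cbI /= !mem_setE !in_itv /=.
have n_le : n.+1%:R / N%:R <= n.+2%:R / N%:R :> R.
  by rewrite ler_pM2r ?invr_gt0 // ler_nat.
have n_ge0 : 0 <= n.+1%:R / N%:R :> R by rewrite divr_ge0.
case: (leP 0 x) => x0 /=; last by rewrite ltNge (le_trans (ltW x0) n_ge0) addr0.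
case: (leP x (n.+1%:R / N%:R)) => xn /=; last by rewrite add0r.
by rewrite (le_trans xn n_le) addr0.
Qed.

Lemma sum_indic_cbI_unit x : unitI R x ->
  \sum_(1 <= i < N.+1) \1_(cbI R N i) x = 1 :> R.
Proof.
rewrite sum_indic_cbI // indicE mem_setE divff ?gt_eqF //.
by rewrite /unitI /= => ->.
Qed.

Definition cb_ramp (y : R) (j : nat) : R :=
  N%:R * (Num.min y (j%:R / N%:R) - Num.min y ((j%:R - 1) / N%:R)).

(* On [0, 1], [cb_hat y j] is the hat function of height 1 and half-width 1/N
   centred at j/N. *)
Definition cb_hat (y : R) (j : nat) : R := cb_ramp y j - cb_ramp y j.+1.

Lemma lebesgue_measure_setI_cbI y j : (1 <= j)%N -> 0 <= y ->
  fine ((@lebesgue_measure R) (`[0, y]%classic `&` cbI R N j)) = cb_ramp y j / N%:R.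
Proof.
move=> j_ge1 y0; rewrite /cb_ramp mulrC mulrA mulVf ?gt_eqF // mul1r /cbI.
case: ifP => [/eqP ->|/eqP j_neq1].
  rewrite lebesgue_measure_setI_itv_cc ?invr_ge0 ?ler0n //= div1r subrr mul0r.
  by rewrite [Num.min y 0]minEle; case: leP => y_le0; rewrite ?subr0 //; lra.
case: j j_ge1 j_neq1 => [//|[//|j]] _ _ /=.
rewrite lebesgue_measure_setI_itv_oc ?divr_ge0 ?ler_pM2r ?invr_gt0 ?ler_nat //=.
by rewrite -natr1 addrK.
Qed.

Lemma cb_ramp0 y : 0 <= y -> cb_ramp y 0 = 1.
Proof.
move=> y0; rewrite /cb_ramp mul0r sub0r mulNr mul1r.
have N_inv_gt0 : 0 < N%:R^-1 :> R by rewrite invr_gt0.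
rewrite (minEle y 0) (minEle y (- _)); case: leP => y_le0; case: leP => ?; try lra.
  by rewrite (_ : y = 0) ?sub0r ?opprK ?mulfV ?gt_eqF //; lra.
by rewrite sub0r opprK mulfV ?gt_eqF.
Qed.

Lemma cb_ramp_last y : y <= 1 -> cb_ramp y N.+1 = 0.
Proof.
move=> y1; rewrite /cb_ramp -natr1 addrK divff ?gt_eqF // !minEle.
have : 1 <= (N%:R + 1) / N%:R :> R by rewrite ler_pdivlMr // mul1r lerDl.
by move=> /(le_trans y1) ->; rewrite y1 subrr mulr0.
Qed.

Lemma cb_hatE y j : let a := j%:R / N%:R in let h := N%:R^-1 in
  cb_hat y j = N%:R *
    ((Num.min y a - Num.min y (a - h)) - (Num.min y (a + h) - Num.min y a)).
Proof.
rewrite /cb_hat /cb_ramp -mulrBr /= mulrBl mul1r -natr1 addrK.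
by rewrite [in (_ + 1) / _]mulrDl mul1r.
Qed.

Lemma cb_hat_ge0 y j : 0 <= cb_hat y j.
Proof.
rewrite cb_hatE mulr_ge0 ?ler0n // subr_ge0.
by apply: minr_diff_concave; rewrite invr_ge0 ler0n.
Qed.

Lemma cb_hat_neq0 y j : cb_hat y j != 0 -> `|y - j%:R / N%:R| < N%:R^-1.
Proof.
have h_ge0 : 0 <= N%:R^-1 :> R by rewrite invr_ge0 ler0n.
rewrite cb_hatE; apply: contraNT; rewrite ltr_norml negb_and -!leNgt => far.
rewrite minr_diff_affine ?subrr ?mulr0 //.
by case/orP: far => ?; [left | right]; lra.
Qed.

Lemma sum_cb_hat y : 0 <= y <= 1 -> \sum_(0 <= j < N.+1) cb_hat y j = 1.
Proof.
move=> /andP[y0 y1].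
under eq_bigr => j _ do rewrite /cb_hat -[cb_ramp y j]opprK addrC.
by rewrite telescope_sumr // cb_ramp_last // cb_ramp0 // oppr0 opprK add0r.
Qed.
End checkerboard.

Section doubly_stochastic.
Variables (R : realType) (mu : {measure set (R * R)%type -> \bar R})
  (K : R -> {measure set R -> \bar R}).
Hypotheses (mu_ds : doubly_stochastic mu) (K_markov : markov_kernel_of mu K).

Let measurable_unitI : measurable (unitI R). Proof. exact: measurable_itv. Qed.

Let itv_sub_unitI (a b : R) : 0 <= a -> b <= 1 -> `[a, b]%classic `<=` unitI R.
Proof.
by move=> a0 b1 z; rewrite /unitI /= !in_itv /= => /andP[? ?]; apply/andP; split; lra.
Qed.

Lemma mu_setX_fin_num A B : measurable A -> measurable B ->
  A `<=` unitI R -> B `<=` unitI R -> mu (A `*` B) \is a fin_num.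
Proof.
move=> mA mB sA sB; rewrite ge0_fin_numE // (@le_lt_trans _ _ 1%E) ?ltry //.
have [_ [mu_left _]] := mu_ds.
have -> : 1%E = mu (unitI R `*` unitI R).
  by rewrite mu_left // lebesgue_measure_itv /= lte_fin ltr01 oppr0 adde0.
by apply: le_measure; rewrite ?inE; [exact: measurableX..|apply: setSX].
Qed.

Lemma mu_setX_itv00 A : measurable A -> A `<=` unitI R ->
  mu (A `*` `[0, 0]%classic) = 0%E.
Proof.
move=> mA sA; apply/eqP; rewrite eq_le measure_ge0 andbT.
have [_ [_ mu_right]] := mu_ds.
have <- : (@lebesgue_measure R) `[0, 0]%classic = 0%E.
  by rewrite lebesgue_measure_itv /= ltxx.
rewrite -mu_right //; last exact: itv_sub_unitI ler01.
by apply: le_measure; rewrite ?inE; [exact: measurableX..|exact: setSX].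
Qed.

Lemma mu_setX_itv_oc A (a b : R) : measurable A -> A `<=` unitI R ->
  0 <= a -> a <= b -> b <= 1 ->
  fine (mu (A `*` `]a, b]%classic)) =
  fine (mu (A `*` `[0, b]%classic)) - fine (mu (A `*` `[0, a]%classic)).
Proof.
move=> mA sA a0 ab b1.
rewrite [`[0, b]%classic](@itv_bndbnd_setU _ _ _ (BRight a)) ?bnd_simp //.
have -> : forall B C : set R, A `*` (B `|` C) = A `*` B `|` A `*` C.
  by move=> B C; apply/seteqP; split => -[x y] /=; tauto.
rewrite measureU; [|exact: measurableX..|].
- rewrite fineD ?mu_setX_fin_num //; first by rewrite addrAC subrr add0r.
    exact: itv_sub_unitI (lexx 0) (le_trans ab b1).
  by move=> z; rewrite /unitI /= !in_itv /= => /andP[? ?]; apply/andP; split; lra.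
- apply/seteqP; split => // -[x y] /= [[_]]; rewrite !in_itv /=.
  by move=> /andP[_ ?] [_ /andP[? _]]; lra.
Qed.

Lemma kernel_itv_fin_num t s : unitI R t -> s <= 1 ->
  K t `[0, s]%classic \is a fin_num.
Proof.
move=> ut s1; rewrite ge0_fin_numE // (@le_lt_trans _ _ 1%E) ?ltry //.
have [K_prob _] := K_markov; rewrite -(K_prob t ut).1.
by apply: le_measure; rewrite ?inE //; exact: itv_sub_unitI.
Qed.

Lemma mu_setX_itv_bounds A (s r c C : R) :
  measurable A -> A `<=` unitI R -> s <= 1 -> (@lebesgue_measure R) A = r%:E ->
  (forall t, A t -> c <= fine (K t `[0, s]%classic) <= C) ->
  c * r <= fine (mu (A `*` `[0, s]%classic)) <= C * r.
Proof.
move=> mA sA s1 lebA K_bounds.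
have s_sub : `[0, s]%classic `<=` unitI R by exact: itv_sub_unitI.
have [_ [K_meas K_int]] := K_markov.
have mK : measurable_fun A (fun t => K t `[0, s]%classic).
  exact: measurable_funS (K_meas _ (measurable_itv _) s_sub).
have K_fin t : A t -> K t `[0, s]%classic = (fine (K t `[0, s]%classic))%:E.
  by move=> At; rewrite fineK // kernel_itv_fin_num //; exact: sA.
have cst_int (k : R) : (k * r)%:E = (\int[@lebesgue_measure R]_(t in A) k%:E)%E.
  by rewrite integral_cst // EFinM; congr (_ * _)%E; exact: esym lebA.
rewrite -!lee_fin fineK ?mu_setX_fin_num // -K_int //; apply/andP; split.
- have [c_le0|c_gt0] := leP c 0.
    apply: (@le_trans _ _ 0%E); last exact: integral_ge0.
    by rewrite lee_fin mulr_le0_ge0 // -lee_fin -lebA.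
  rewrite cst_int; apply: ge0_le_integral => // [t _|t At].
    by rewrite lee_fin ltW.
  by rewrite K_fin // lee_fin; case/andP: (K_bounds t At).
- rewrite cst_int; apply: ge0_le_integral => // t At.
  by rewrite K_fin // lee_fin; case/andP: (K_bounds t At).
Qed.

Definition strip_avg N i j : R :=
  N%:R * fine (mu (cbI R N i `*` `[0, j%:R / N%:R]%classic)).

Lemma strip_avg0 N i : (1 <= i <= N)%N -> strip_avg N i 0 = 0.
Proof.
move=> hi; have N_gt0 : (0 < N)%N by case/andP: hi; exact: leq_trans.
rewrite /strip_avg mul0r mu_setX_itv00 ?mulr0 //; first exact: measurable_cbI.
exact: cbI_sub_unit.
Qed.

Lemma mu_cbQ N i j : (1 <= i <= N)%N -> (1 <= j <= N)%N ->
  fine (mu (cbQ R N i j)) = (strip_avg N i j - strip_avg N i j.-1) / N%:R.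
Proof.
move=> hi /andP[j_ge1 j_le]; have N_gt0 : (0 < N)%N := leq_trans j_ge1 j_le.
have N_pos : 0 < N%:R :> R by rewrite ltr0n.
have mI : measurable (cbI R N i) by exact: measurable_cbI.
have sI : cbI R N i `<=` unitI R by exact: cbI_sub_unit.
rewrite /strip_avg -mulrBr mulrC mulrA mulVf ?gt_eqF // mul1r /cbQ [cbI R N j]/cbI.
case: ifP => [/eqP -> /=|/eqP j_neq1].
  by rewrite mul0r mu_setX_itv00 // subr0 div1r.
case: j j_ge1 j_le j_neq1 => [//|[//|j]] _ j_le _ /=.
rewrite mu_setX_itv_oc ?divr_ge0 ?ler_pM2r ?invr_gt0 ?ler_nat //.
by rewrite ler_pdivrMr // mul1r ler_nat.
Qed.

Lemma cb_kernel_hatE N x y : (0 < N)%N -> 0 <= y <= 1 ->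
  cb_kernel mu N x y = \sum_(1 <= i < N.+1) \1_(cbI R N i) x *
    \sum_(0 <= j < N.+1) cb_hat N y j * strip_avg N i j.
Proof.
move=> N_gt0 /andP[y0 y1]; have N_pos : 0 < N%:R :> R by rewrite ltr0n.
rewrite /cb_kernel mulr_sumr; apply: eq_big_nat => i /andP[i_ge1 i_lt].
have hi : (1 <= i <= N)%N by rewrite i_ge1 -ltnS.
have row : N%:R ^+ 2 * \sum_(1 <= j < N.+1) fine (mu (cbQ R N i j)) *
      fine ((@lebesgue_measure R) (`[0%R, y]%classic `&` cbI R N j)) =
    \sum_(0 <= j < N.+1) cb_hat N y j * strip_avg N i j.
  have -> : \sum_(1 <= j < N.+1) fine (mu (cbQ R N i j)) *
      fine ((@lebesgue_measure R) (`[0%R, y]%classic `&` cbI R N j)) =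
    \sum_(1 <= j < N.+1)
      (strip_avg N i j - strip_avg N i j.-1) * cb_ramp N y j / N%:R ^+ 2.
    apply: eq_big_nat => j /andP[j_ge1 j_lt].
    have hj : (1 <= j <= N)%N by rewrite j_ge1 -ltnS.
    rewrite mu_cbQ // lebesgue_measure_setI_cbI //.
    by field; rewrite gt_eqF.
  rewrite -mulr_suml mulrC mulfVK ?expf_neq0 ?gt_eqF //.
  rewrite summation_by_parts strip_avg0 // cb_ramp_last // mulr0 mul0r !subr0 addr0.
  by apply: eq_bigr => j _; rewrite mulrC.
rewrite -row mulrCA; congr (_ * _); rewrite mulr_sumr.
by apply: eq_bigr => j _; rewrite mulrCA mulrA.
Qed.

Let F (p : R * R) : R := fine (K p.1 `[0%R, p.2]%classic).

Lemma strip_avg_near N i j x y (eps d : R) : N%:R^-1 < d ->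
  (1 <= i <= N)%N -> (j <= N)%N -> cbI R N i x -> unitI R y ->
  `|y - j%:R / N%:R| < N%:R^-1 ->
  (forall p q, (unitI R `*` unitI R) p -> (unitI R `*` unitI R) q ->
     ball p d q -> ball (F p) eps (F q)) ->
  `|strip_avg N i j - F (x, y)| <= eps.
Proof.
move=> N_inv_lt hi j_le xi uy yj F_unif.
have N_gt0 : (0 < N)%N by case/andP: hi; exact: leq_trans.
have N_pos : 0 < N%:R :> R by rewrite ltr0n.
have sI : cbI R N i `<=` unitI R by exact: cbI_sub_unit.
have jN_le1 : j%:R / N%:R <= 1 :> R by rewrite ler_pdivrMr // mul1r ler_nat.
have jN_unit : unitI R (j%:R / N%:R).
  by rewrite /unitI /= in_itv /= divr_ge0 // jN_le1.
have K_near t : cbI R N i t ->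
    F (x, y) - eps <= fine (K t `[0%R, j%:R / N%:R]%classic) <= F (x, y) + eps.
  move=> ti; rewrite -ler_distl; apply/ltW/(F_unif (t, _) (x, _)).
  - by split => //; exact: sI.
  - by split => //; exact: sI.
  - split; first exact: le_lt_trans (cbI_dist ti xi) N_inv_lt.
    by rewrite /ball /= distrC (lt_trans yj).
have mI : measurable (cbI R N i) by exact: measurable_cbI.
have lebI : (@lebesgue_measure R) (cbI R N i) = (N%:R^-1)%:E.
  by apply: lebesgue_measure_cbI; case/andP: hi.
have /andP[lo up] := mu_setX_itv_bounds mI sI jN_le1 lebI K_near.
rewrite /strip_avg ler_distl; apply/andP; split.
  by rewrite mulrC -ler_pdivrMr.
by rewrite mulrC -ler_pdivlMr.
Qed.

Lemma cb_kernel_near N x y (eps d : R) : (0 < N)%N -> N%:R^-1 < d ->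
  (forall p q, (unitI R `*` unitI R) p -> (unitI R `*` unitI R) q ->
     ball p d q -> ball (F p) eps (F q)) ->
  unitI R x -> unitI R y -> `|cb_kernel mu N x y - F (x, y)| <= eps.
Proof.
move=> N_gt0 N_inv_lt F_unif ux uy.
have y01 : 0 <= y <= 1 by move: uy; rewrite /unitI /= in_itv.
rewrite cb_kernel_hatE //.
apply: ler_dist_convex_sum => [i _|i|]; last exact: sum_indic_cbI_unit.
  by rewrite indicE ler0n.
rewrite mem_index_iota => /andP[i_ge1 i_lt].
rewrite indicE pnatr_eq0 eqb0 negbK => /set_mem xi.
have hi : (1 <= i <= N)%N by rewrite i_ge1 -ltnS.
apply: ler_dist_convex_sum => [j _|j|]; [exact: cb_hat_ge0| |exact: sum_cb_hat].
rewrite mem_index_iota ltnS => /andP[_ j_le] /cb_hat_neq0 yj.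
exact: (strip_avg_near N_inv_lt hi j_le xi uy yj F_unif).
Qed.

End doubly_stochastic.

Theorem lemma3p2 (R : realType) (mu : {measure set (R * R)%type -> \bar R})
  (K : R -> {measure set R -> \bar R}) :
  doubly_stochastic mu ->
  markov_kernel_of mu K ->
  continuous_kernel K ->
  (fun N : nat =>
     ereal_sup [set (`| cb_kernel mu N p.1 p.2 - fine (K p.1 `[0%R, p.2]%classic) |)%:E
               | p in unitI R `*` unitI R])
    @ \oo --> 0%E.
Proof.
move=> mu_ds K_markov K_cont.
have unit0 : unitI R 0 by rewrite /unitI /= in_itv /= lexx ler01.
have square_compact : compact (unitI R `*` unitI R).
  by apply: compact_setX; exact: segment_compact.
apply: ereal_sup_norm_cvg0 => [|eps eps_gt0]; first by exists (0, 0).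
have [d d_gt0 K_unif] :=
  compact_within_unif_continuous square_compact K_cont eps_gt0.
near=> N => -[x y] [ux uy].
have N_big : d^-1 < N%:R by near: N; exact: nbhs_infty_gtr.
have N_pos : 0 < N%:R :> R by apply: lt_trans N_big; rewrite invr_gt0.
apply: (cb_kernel_near mu_ds K_markov _ _ K_unif) => //; first by rewrite -(ltr0n R).
by rewrite -[d]invrK ltf_pV2 ?posrE ?invr_gt0.
Unshelve. all: by end_near.
Qed.
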